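(* Let $\Gamma=\{\mathrm{id},\gamma\}$ and $\tau(\gamma)$ be the half-turn $(x,y,z)\mapsto(x,-y,-z)$. Let $G$ be a $\Gamma$-symmetric graph (write $u'=\phi(\gamma)u$) with an edge $vv'$ where $v\ne v'$. Let $G_1$ be the graph with $V(G_1)=V(G)\cup\{w,w'\}$ ($w,w'$ new, swapped by the action) and $E(G_1)=E(G)\setminus\{vv'\}\cup\{wv,wv',w'v,w'v',ww'\}$. If $G$ is $\tau(\Gamma)$-rigid on $\mathcal{Y}$, then $G_1$ is $\tau(\Gamma)$-rigid on $\mathcal{Y}$.
   Context: $\mathcal{Y}=\{(x,y,z):x^2+y^2=1\}$. A framework on $\mathcal{Y}$ is $(G,p)$, $G$ finite simple, $p:V\to\mathcal{Y}$, $p(u)\neq p(v)$ for edges $uv$. Its rigidity matrix $R_{\mathcal{Y}}(G,p)$ is the $(|E|+|V|)\times 3|V|$ matrix with a row for each edge $v_iv_j$ having $p(v_i)-p(v_j)$ in the columns of $v_i$ and $p(v_j)-p(v_i)$ in those of $v_j$, and a row for each vertex $v_i$ with $p(v_i)=(x_i,y_i,z_i)$ having $(x_i,y_i,0)$ in the columns of $v_i$ (zeros elsewhere). The framework is infinitesimally rigid if every kernel vector $u$ has the form $u_i=(0,0,a)+b(-y_i,x_i,0)$. A graph is $\Gamma$-symmetric if equipped with a homomorphism $\phi:\Gamma\to\operatorname{Aut}(G)$. A framework is $\Gamma$-symmetric w.r.t. $\phi,\tau$ if $\tau(\gamma)p(v)=p(\phi(\gamma)v)$. $G$ is $\tau(\Gamma)$-rigid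 if some $\Gamma$-symmetric framework $(G,p)$ on $\mathcal{Y}$ is infinitesimally rigid. *)

From HB Require Import structures.
From mathcomp Require Import all_boot all_order all_algebra.
From mathcomp Require Import reals.
Set Implicit Arguments. Unset Strict Implicit. Unset Printing Implicit Defensive.
Import Order.TTheory GRing.Theory Num.Theory.
Local Open Scope ring_scope.

Section Defs.
Variable R : realType.

Record pt := Pt { px : R; py : R; pz : R }.

Definition dot3 (a b : pt) : R := px a * px b + py a * py b + pz a * pz b.
Definition sub3 (a b : pt) : pt := Pt (px a - px b) (py a - py b) (pz a - pz b).

Definition on_cyl (q : pt) : Prop := px q ^+ 2 + py q ^+ 2 = 1.

Definition halfturn (q : pt) : pt := Pt (px q) (- py q) (- pz q).

Variable V : finType.

Definition framework_on_cyl (E : rel V) (p : V -> pt) : Prop :=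
  (forall i, on_cyl (p i)) /\ (forall i j, E i j -> p i <> p j).

(* u : V -> R^3 (a vector of R^{3|V|}) lies in the kernel of the rigidity
   matrix R_Y(G,p): the row of edge v_i v_j gives
   (p_i - p_j).u_i + (p_j - p_i).u_j = 0, the row of vertex v_i gives
   (x_i, y_i, 0).u_i = 0. *)
Definition in_ker_rigmx (E : rel V) (p : V -> pt) (u : V -> pt) : Prop :=
  (forall i j, E i j ->
      dot3 (sub3 (p i) (p j)) (u i) + dot3 (sub3 (p j) (p i)) (u j) = 0) /\
  (forall i, dot3 (Pt (px (p i)) (py (p i)) 0) (u i) = 0).

Definition inf_rigid (E : rel V) (p : V -> pt) : Prop :=
  forall u, in_ker_rigmx E p u ->
    exists a b : R, forall i,
      u i = Pt (0 + b * - py (p i)) (0 + b * px (p i)) (a + b * 0).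

(* Gamma = {id, gamma} = Z/2 acts on G via phi(gamma) = s, an involutive
   graph automorphism. *)
Definition simple_graph (E : rel V) : Prop :=
  (forall i j, E i j = E j i) /\ (forall i, ~~ E i i).
Definition Z2_action (E : rel V) (s : V -> V) : Prop :=
  (forall i, s (s i) = i) /\ (forall i j, E (s i) (s j) = E i j).

(* framework Gamma-symmetric wrt phi, tau: tau(gamma) p(v) = p(phi(gamma) v)
   (the condition for gamma = id is trivial) *)
Definition sym_framework (s : V -> V) (p : V -> pt) : Prop :=
  forall i, halfturn (p i) = p (s i).

Definition tau_rigid (E : rel V) (s : V -> V) : Prop :=
  exists p : V -> pt, framework_on_cyl E p /\ sym_framework s p /\ inf_rigid E p.

End Defs.

(* The graph G1: vertices V + bool, inl a = old vertex a, inr false = w,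
   inr true = w'. *)
Section Ext.
Variables (V : finType) (E : rel V) (s : V -> V) (v : V).

Definition is_vv' (a b : V) : bool :=
  ((a == v) && (b == s v)) || ((a == s v) && (b == v)).

Definition ext_edge (x y : V + bool) : bool :=
  match x, y with
  | inl a, inl b => E a b && ~~ is_vv' a b
  | inl a, inr _ => (a == v) || (a == s v)
  | inr _, inl b => (b == v) || (b == s v)
  | inr c, inr d => c != d
  end.

Definition ext_act (x : V + bool) : V + bool :=
  match x with
  | inl a => inl (s a)
  | inr c => inr (~~ c)
  end.
End Ext.

From HB Require Import structures.
From mathcomp Require Import all_boot all_order all_algebra.
From mathcomp Require Import boolp reals ring lra.
Set Implicit Arguments. Unset Strict Implicit. Unset Printing Implicit Defensive.
Import Order.TTheory GRing.Theory Num.Theory.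
Local Open Scope ring_scope.

(* Deleting vv' from the rigid symmetric framework (G, p) leaves a kernel
   spanned by the trivial motions and at most one further vector m, which can
   be made gamma-symmetric by adding its mirror image and which is then
   nonzero on the row of vv'.  Keep p on G, put w at a point Q of the cylinder
   and w' at its half-turn.  Modulo a trivial motion a kernel vector of G1 is
   k m on G, and the rows of w, w' and of the five new edges form a 7 x 7
   linear system in k and the velocities of w, w'; Q is chosen, by cases on
   the position of p(v), so that this system has only the zero solution. *)

Section Geometry.
Variable R : realType.
Implicit Types (P Q D X Y : pt R) (k : R).

Definition zero3 : pt R := Pt 0 0 0.
Definition add3 P Q : pt R := Pt (px P + px Q) (py P + py Q) (pz P + pz Q).
Definition scale3 k P : pt R := Pt (k * px P) (k * py P) (k * pz P).
Definition surface_row P X := dot3 (Pt (px P) (py P) 0) X.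
Definition edge_row P Q X Y := dot3 (sub3 P Q) X + dot3 (sub3 Q P) Y.

Definition trivial_motion (a b : R) P : pt R :=
  Pt (0 + b * - py P) (0 + b * px P) (a + b * 0).

Lemma halfturnK : involutive (@halfturn R).
Proof. by case=> a b c; rewrite /halfturn /= !opprK. Qed.

Lemma on_cyl_halfturn P : on_cyl P -> on_cyl (halfturn P).
Proof. by rewrite /on_cyl /= sqrrN. Qed.

Lemma edge_row_halfturn P Q X Y :
  edge_row (halfturn P) (halfturn Q) (halfturn X) (halfturn Y) = edge_row P Q X Y.
Proof. rewrite /edge_row /dot3 /=; ring. Qed.

Lemma surface_row_halfturn P X :
  surface_row (halfturn P) (halfturn X) = surface_row P X.
Proof. rewrite /surface_row /dot3 /=; ring. Qed.

Lemma edge_row_add P Q X Y X' Y' :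
  edge_row P Q (add3 X X') (add3 Y Y') = edge_row P Q X Y + edge_row P Q X' Y'.
Proof. rewrite /edge_row /dot3 /=; ring. Qed.

Lemma edge_row_scale k P Q X Y :
  edge_row P Q (scale3 k X) (scale3 k Y) = k * edge_row P Q X Y.
Proof. rewrite /edge_row /dot3 /=; ring. Qed.

Lemma surface_row_add P X X' :
  surface_row P (add3 X X') = surface_row P X + surface_row P X'.
Proof. rewrite /surface_row /dot3 /=; ring. Qed.

Lemma surface_row_scale k P X : surface_row P (scale3 k X) = k * surface_row P X.
Proof. rewrite /surface_row /dot3 /=; ring. Qed.

Lemma add3_scaleN_eq k X Y Z : add3 X (scale3 (- k) Y) = Z -> X = add3 Z (scale3 k Y).
Proof.
case: X Y Z => x1 x2 x3 [y1 y2 y3] [z1 z2 z3]; rewrite /add3 /scale3 /= => -[<- <- <-].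
by congr Pt; ring.
Qed.

(* [P] is the position of v, [D] the velocity of v under m, [Q] and
   [halfturn Q] are the positions of w and w'; [X] and [Y] their velocities. *)
Definition rigidifying_point P D Q : Prop :=
  [/\ on_cyl Q, Q <> P, Q <> halfturn P, Q <> halfturn Q &
   forall k X Y, k = 0 \/ dot3 (sub3 P (halfturn P)) D != 0 ->
     surface_row Q X = 0 -> surface_row (halfturn Q) Y = 0 ->
     edge_row Q P X (scale3 k D) = 0 ->
     edge_row Q (halfturn P) X (scale3 k (halfturn D)) = 0 ->
     edge_row (halfturn Q) P Y (scale3 k D) = 0 ->
     edge_row (halfturn Q) (halfturn P) Y (scale3 k (halfturn D)) = 0 ->
     edge_row Q (halfturn Q) X Y = 0 ->
     [/\ k = 0, X = zero3 & Y = zero3]].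

Lemma rigidifying_point_generic a b c D : a != 0 -> b != 0 ->
  a ^+ 2 + b ^+ 2 = 1 -> rigidifying_point (Pt a b c) D (Pt a b (c + 1)).
Proof.
move=> a0 b0 cyl; split => //; try by case; lra.
move: D => [d1 d2 d3] k [x1 x2 x3] [y1 y2 y3].
rewrite /surface_row /edge_row /dot3 /halfturn /= => hk *.
have {hk} k0 : k = 0.
  have : k * (b * d2 + c * d3) = 0 by lra.
  case: hk => // /eqP hD /eqP; rewrite mulf_eq0 => /orP[/eqP //|/eqP hD'].
  by case: hD; lra.
subst k.
have hx3 : x3 = 0 by lra.
have hy3 : y3 = 0 by lra.
subst x3 y3.
have hx2 : x2 = 0 by apply: (mulfI b0); rewrite mulr0; lra.
have hy2 : y2 = 0 by apply: (mulfI b0); rewrite mulr0; lra.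
subst x2 y2.
have hx1 : x1 = 0 by apply: (mulfI a0); rewrite mulr0; lra.
have hy1 : y1 = 0 by apply: (mulfI a0); rewrite mulr0; lra.
by subst.
Qed.

Lemma rigidifying_point_xz a c g D : a != 0 -> c != 0 -> g != 0 ->
  (pz D != 0 -> py D + g * pz D != 0) ->
  rigidifying_point (Pt a 0 c) D (Pt 0 1 g).
Proof.
move=> a0 c0 g0 hg; split => //; try by case; lra.
  by rewrite /on_cyl /=; lra.
move: D hg => [d1 d2 d3] /= hg k [x1 x2 x3] [y1 y2 y3].
rewrite /surface_row /edge_row /dot3 /halfturn /= => hk *.
have hx2 : x2 = 0 by lra.
have hy2 : y2 = 0 by lra.
subst x2 y2.
have hxy3 : x3 - y3 = 0 by apply: (mulfI g0); rewrite mulr0; lra.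
have hxy3' : x3 + y3 = 0 by apply: (mulfI c0); rewrite mulr0; lra.
have hx3 : x3 = 0 by lra.
have hy3 : y3 = 0 by lra.
subst x3 y3.
have {hk} k0 : k = 0.
  have : k * (d2 + g * d3) = 0 by lra.
  case: hk => // /eqP hD /eqP; rewrite mulf_eq0 => /orP[/eqP //|/eqP hD'].
  have d30 : d3 != 0 by apply/eqP => d30; apply: hD; rewrite d30; lra.
  by move: (hg d30); rewrite hD' eqxx.
subst k.
have hx1 : x1 = 0 by apply: (mulfI a0); rewrite mulr0; lra.
have hy1 : y1 = 0 by apply: (mulfI a0); rewrite mulr0; lra.
by subst.
Qed.

Lemma rigidifying_point_yz b c t D : b != 0 -> t ^+ 2 = 1 -> py D = 0 ->
  (c * pz D != 0 -> c * pz D != t * px D) ->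
  rigidifying_point (Pt 0 b c) D (Pt t 0 1).
Proof.
move=> b0 t2 d20 ht.
have t0 : t != 0 by apply/eqP => t0; move: t2; rewrite t0; lra.
split => //; try by case; lra.
  by rewrite /on_cyl /=; lra.
move: D d20 ht => [d1 d2 d3] /= -> ht k [x1 x2 x3] [y1 y2 y3].
rewrite /surface_row /edge_row /dot3 /halfturn /= => hk *.
have hx1 : x1 = 0 by apply: (mulfI t0); rewrite mulr0; lra.
have hy1 : y1 = 0 by apply: (mulfI t0); rewrite mulr0; lra.
subst x1 y1.
have hx3 : x3 = 0 by lra.
have hy3 : y3 = 0 by lra.
subst x3 y3.
have {hk} k0 : k = 0.
  have : k * (c * d3 - t * d1) = 0 by lra.
  case: hk => // /eqP hD /eqP; rewrite mulf_eq0 => /orP[/eqP //|/eqP hD'].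
  have cd30 : c * d3 != 0 by apply/eqP => cd30; apply: hD; lra.
  by move: (ht cd30); rewrite -subr_eq0 hD' eqxx.
subst k.
have hx2 : x2 = 0 by apply: (mulfI b0); rewrite mulr0; lra.
have hy2 : y2 = 0 by apply: (mulfI b0); rewrite mulr0; lra.
by subst.
Qed.

Lemma exists_rigidifying_point P D : on_cyl P -> P <> halfturn P ->
  surface_row P D = 0 -> exists Q, rigidifying_point P D Q.
Proof.
case: P D => a b c [d1 d2 d3]; rewrite /on_cyl /surface_row /dot3 /=.
move=> cyl hPH hD.
(* The shifts g and t keep the coefficient of k after elimination nonzero. *)
have [b0|b0] := eqVneq b 0.
  subst b; have a0 : a != 0 by apply/eqP => a0; move: cyl; rewrite a0; lra.
  have c0 : c != 0 by apply/eqP => c0; apply: hPH; rewrite /halfturn c0 /= !oppr0.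
  have [g [g0 hg]] : exists g : R, g != 0 /\ (d3 != 0 -> d2 + g * d3 != 0).
    by have [?|?] := eqVneq (d2 + d3) 0; [exists 2 | exists 1]; split; lra.
  by exists (Pt 0 1 g); apply: rigidifying_point_xz.
have [a0|a0] := eqVneq a 0; last first.
  by exists (Pt a b (c + 1)); apply: rigidifying_point_generic.
subst a; have d20 : d2 = 0 by apply: (mulfI b0); rewrite mulr0; lra.
have [t [t2 ht]] : exists t : R, t ^+ 2 = 1 /\ (c * d3 != 0 -> c * d3 != t * d1).
  by have [?|?] := eqVneq d1 (c * d3); [exists (-1) | exists 1]; split; lra.
by exists (Pt t 0 1); apply: rigidifying_point_yz.
Qed.

End Geometry.

Arguments zero3 {R}.

Section Kernel.
Variables (R : realType) (V : finType) (E : rel V) (p : V -> pt R).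

Lemma in_ker_rigmx_add x y : in_ker_rigmx E p x -> in_ker_rigmx E p y ->
  in_ker_rigmx E p (fun i => add3 (x i) (y i)).
Proof.
move=> [xE xS] [yE yS]; split=> [i j ij|i].
  by rewrite [LHS]edge_row_add /edge_row (xE i j ij) (yE i j ij) addr0.
by rewrite [LHS]surface_row_add /surface_row (xS i) (yS i) addr0.
Qed.

Lemma in_ker_rigmx_scale k x : in_ker_rigmx E p x ->
  in_ker_rigmx E p (fun i => scale3 k (x i)).
Proof.
move=> [xE xS]; split=> [i j ij|i].
  by rewrite [LHS]edge_row_scale /edge_row (xE i j ij) mulr0.
by rewrite [LHS]surface_row_scale /surface_row (xS i) mulr0.
Qed.

Lemma in_ker_rigmx_trivial a b : in_ker_rigmx E p (fun i => trivial_motion a b (p i)).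
Proof. by split=> [i j _|i]; rewrite /dot3 /=; ring. Qed.

End Kernel.

Section Extension.
Variables (R : realType) (V : finType) (E : rel V) (s : V -> V) (v : V) (p : V -> pt R).
Hypotheses (sK : involutive s) (E_s : forall i j, E (s i) (s j) = E i j).
Hypothesis p_sym : sym_framework s p.

Definition del_edge : rel V := fun i j => E i j && ~~ is_vv' s v i j.

Definition mirror (x : V -> pt R) i := halfturn (x (s i)).

Definition vv'_row (x : V -> pt R) := edge_row (p v) (p (s v)) (x v) (x (s v)).

Lemma p_s i : p (s i) = halfturn (p i).
Proof. by rewrite p_sym. Qed.

Lemma p_halfturn_s i : p i = halfturn (p (s i)).
Proof. by rewrite p_s halfturnK. Qed.

Lemma del_edge_s i j : del_edge (s i) (s j) = del_edge i j.
Proof.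
have s_eq k l : (s k == l) = (k == s l) by rewrite -{1}(sK l) (inj_eq (can_inj sK)).
by rewrite /del_edge E_s /is_vv' !s_eq sK orbC.
Qed.

Lemma in_ker_mirror x : in_ker_rigmx del_edge p x -> in_ker_rigmx del_edge p (mirror x).
Proof.
move=> [xE xS]; split=> [i j ij|i].
  rewrite /mirror (p_halfturn_s i) (p_halfturn_s j) [LHS]edge_row_halfturn.
  by apply: xE; rewrite del_edge_s.
by rewrite /mirror (p_halfturn_s i) [LHS]surface_row_halfturn; apply: xS.
Qed.

Lemma in_ker_del_edge x :
  in_ker_rigmx del_edge p x -> vv'_row x = 0 -> in_ker_rigmx E p x.
Proof.
move=> [xE xS] x0; split=> // i j ij.
have [|not_vv'] := boolP (is_vv' s v i j); last by apply: xE; rewrite /del_edge ij.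
by case/orP=> /andP[/eqP-> /eqP->]; last rewrite addrC.
Qed.

Lemma vv'_row_mirror x : vv'_row (mirror x) = vv'_row x.
Proof. rewrite /vv'_row /mirror sK p_s /edge_row /dot3 /=; ring. Qed.

Lemma vv'_row_sym m : sym_framework s m ->
  vv'_row m = 2 * dot3 (sub3 (p v) (halfturn (p v))) (m v).
Proof. move=> m_sym; rewrite /vv'_row p_s -m_sym /edge_row /dot3 /=; ring. Qed.

Hypothesis p_rigid : inf_rigid E p.

Lemma del_edge_kernel_span m : in_ker_rigmx del_edge p m -> vv'_row m != 0 ->
  forall x, in_ker_rigmx del_edge p x -> exists a b k,
    forall i, x i = add3 (trivial_motion a b (p i)) (scale3 k (m i)).
Proof.
move=> m_ker m0 x x_ker; pose k := vv'_row x / vv'_row m.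
pose y i := add3 (x i) (scale3 (- k) (m i)).
have y_ker : in_ker_rigmx del_edge p y.
  by apply: in_ker_rigmx_add => //; exact: in_ker_rigmx_scale.
have y0 : vv'_row y = 0.
  by rewrite [LHS]edge_row_add edge_row_scale /k mulNr divfK // subrr.
have [a [b yT]] := p_rigid (in_ker_del_edge y_ker y0).
by exists a, b, k => i; apply: add3_scaleN_eq; exact: yT.
Qed.

Definition spans_ker_mod_trivial m := forall x, in_ker_rigmx del_edge p x ->
  exists a b k, (k = 0 \/ dot3 (sub3 (p v) (halfturn (p v))) (m v) != 0) /\
    forall i, x i = add3 (trivial_motion a b (p i)) (scale3 k (m i)).

Lemma del_edge_kernel : exists m,
  [/\ in_ker_rigmx del_edge p m, sym_framework s m & spans_ker_mod_trivial m].
Proof.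
have [[m [m_ker m0]]|row0] :=
  pselect (exists m, in_ker_rigmx del_edge p m /\ vv'_row m != 0).
  pose ms i := add3 (m i) (mirror m i).
  have ms_ker : in_ker_rigmx del_edge p ms.
    by apply: in_ker_rigmx_add => //; exact: in_ker_mirror.
  have ms_sym : sym_framework s ms.
    by move=> i; rewrite /ms /mirror sK /add3 /halfturn /=; congr Pt; ring.
  have ms0 : vv'_row ms != 0.
    have -> : vv'_row ms = vv'_row m + vv'_row (mirror m) := edge_row_add _ _ _ _ _ _.
    by rewrite vv'_row_mirror -mulr2n mulrn_eq0.
  exists ms; split=> // x x_ker.
  have [a [b [k xD]]] := del_edge_kernel_span ms_ker ms0 x_ker.
  exists a, b, k; split=> //; right.
  by move: ms0; rewrite vv'_row_sym // mulf_eq0 negb_or => /andP[].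
exists (fun=> zero3); split.
- by split=> [i j _|i]; rewrite /dot3 /=; ring.
- by move=> i; rewrite /halfturn /= oppr0.
move=> x x_ker.
have x0 : vv'_row x = 0 by apply/eqP/negPn/negP => x0; apply: row0; exists x.
have [a [b xT]] := p_rigid (in_ker_del_edge x_ker x0).
exists a, b, 0; split; first by left.
by move=> i; rewrite xT /add3 /scale3 /=; congr Pt; ring.
Qed.

Definition ext_pos (Q : pt R) (x : V + bool) : pt R :=
  match x with inl i => p i | inr false => Q | inr true => halfturn Q end.

Lemma ext_framework Q : framework_on_cyl E p -> on_cyl Q ->
  Q <> p v -> Q <> halfturn (p v) -> Q <> halfturn Q ->
  framework_on_cyl (ext_edge E s v) (ext_pos Q).
Proof.
move=> [p_cyl p_dist] Q_cyl QP QHP QHQ.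
have HQP : halfturn Q <> p v by move/(congr1 (@halfturn R)); rewrite halfturnK.
have HQHP : halfturn Q <> halfturn (p v) by move/(can_inj (@halfturnK R)).
split; first by case=> [i|[]] /=; [exact: p_cyl | exact: on_cyl_halfturn |].
case=> [i|[]] [j|[]] //= ij; first by case/andP: ij => ij _; exact: p_dist.
all: try by case/orP: ij => /eqP->; rewrite ?p_s; by [|move/esym].
all: by [|move/esym].
Qed.

Lemma ext_sym Q : sym_framework (ext_act s) (ext_pos Q).
Proof. by case=> [i|[]] /=; rewrite ?halfturnK. Qed.

Lemma ext_inf_rigid m Q : sym_framework s m -> spans_ker_mod_trivial m ->
  rigidifying_point (p v) (m v) Q -> inf_rigid (ext_edge E s v) (ext_pos Q).
Proof.
move=> m_sym m_span [_ _ _ _ Q_rigid] u u_ker.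
have u_old : in_ker_rigmx del_edge p (fun i => u (inl i)).
  by case: u_ker => uE uS; split=> [i j|i]; [exact: (uE (inl i) (inl j)) | exact: (uS (inl i))].
have [a [b [k [k_nondeg u_dec]]]] := m_span _ u_old.
pose T x := trivial_motion a b (ext_pos Q x).
pose u' x := add3 (u x) (scale3 (- 1) (T x)).
have [u'E u'S] : in_ker_rigmx (ext_edge E s v) (ext_pos Q) u'.
  by apply: in_ker_rigmx_add => //; apply/in_ker_rigmx_scale/in_ker_rigmx_trivial.
have u'_old i : u' (inl i) = scale3 k (m i).
  by rewrite /u' u_dec /add3 /scale3 /=; congr Pt; ring.
have [k0 u'w u'w'] : [/\ k = 0, u' (inr false) = zero3 & u' (inr true) = zero3].
  apply: Q_rigid; rewrite // ?m_sym -?p_s -?u'_old.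
  - exact: (u'S (inr false)).
  - exact: (u'S (inr true)).
  - by apply: (u'E (inr false) (inl v)); rewrite /= eqxx.
  - by apply: (u'E (inr false) (inl (s v))); rewrite /= eqxx orbT.
  - by apply: (u'E (inr true) (inl v)); rewrite /= eqxx.
  - by apply: (u'E (inr true) (inl (s v))); rewrite /= eqxx orbT.
  - exact: (u'E (inr false) (inr true)).
exists a, b; case=> [i|c].
  by rewrite u_dec k0 /add3 /scale3 /=; congr Pt; ring.
have /add3_scaleN_eq -> : u' (inr c) = zero3 by case: c.
by rewrite /add3 /scale3 /=; congr Pt; ring.
Qed.

Hypotheses (p_fw : framework_on_cyl E p) (E_vv' : E v (s v)).

Lemma ext_tau_rigid : tau_rigid R (ext_edge E s v) (ext_act s).
Proof.
have [m [m_ker m_sym m_span]] := del_edge_kernel.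
have p_vv' : p v <> halfturn (p v) by rewrite -p_s; exact: p_fw.2 _ _ E_vv'.
have [Q Q_pt] := exists_rigidifying_point (p_fw.1 v) p_vv' (m_ker.2 v).
have [Q_cyl QP QHP QHQ _] := Q_pt.
exists (ext_pos Q); split; first exact: ext_framework.
by split; [exact: ext_sym | exact: ext_inf_rigid Q_pt].
Qed.

End Extension.

Theorem lemma4p8 (R : realType) (V : finType) (E : rel V) (s : V -> V) (v : V) :
  simple_graph E -> Z2_action E s ->
  E v (s v) -> v != s v ->
  tau_rigid R E s ->
  tau_rigid R (ext_edge E s v) (ext_act s).
Proof.
move=> _ [sK E_s] E_vv' _ [p [p_fw [p_sym p_rigid]]].
exact: ext_tau_rigid.
Qed.
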